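(* Let $n\ge1$, fix $i\in\{1,\dots,n\}$, and let $f,h\in L^2((0,1)^n)$ be real-valued, both not a.e. constant, and set $g=f+h$. If $\mathrm{Cov}(f,h)=(fh)_0-f_0h_0\ge0$, then $$S^g_{T_{x_i}}\le\frac{\Big(\sqrt{S^f_{T_{x_i}}\mathrm{Var}(f)}+\sqrt{S^h_{T_{x_i}}\mathrm{Var}(h)}\Big)^2}{\mathrm{Var}(f)+\mathrm{Var}(h)},$$ and consequently $S^g_{T_{x_i}}\le 2\max\{S^f_{T_{x_i}},S^h_{T_{x_i}}\}$, where the factor $2$ is sharp.
   Context: All integrals are with respect to Lebesgue measure on $(0,1)^n$ (inputs independent, uniform on $[0,1]$). For $\varphi$, $\varphi_0=\int\varphi$ and $\mathrm{Var}(\varphi)=\int\varphi^2-\varphi_0^2$. With $x_{\sim i}=(x_1,\dots,x_{i-1},x_{i+1},\dots,x_n)$, the total Sobol index of $x_i$ for $\varphi$ is $$S^\varphi_{T_{x_i}}=\frac{\int\varphi^2\,dx-\int\big(\int\varphi\,dx_i\big)^2dx_{\sim i}}{\mathrm{Var}(\varphi)}.$$ *)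

From HB Require Import structures.
From mathcomp Require Import all_boot all_order all_algebra.
From mathcomp Require Import all_classical all_reals all_analysis.
Set Implicit Arguments. Unset Strict Implicit. Unset Printing Implicit Defensive.
Import Order.TTheory GRing.Theory Num.Theory.
Import numFieldNormedType.Exports.
Local Open Scope classical_set_scope.
Local Open Scope ring_scope.

(** Points of R^n are represented as n-tuples (with the library's product
    sigma-algebra on n.-tuple R, generated by the coordinates). *)

Section cube.
Context (R : realType).
Local Notation RL := (measurableTypeR R).

Definition consT n (p : (RL * n.-tuple RL)%type) : n.+1.-tuple RL :=
  [tuple of p.1 :: p.2].

Lemma measurable_consT n : measurable_fun [set: (RL * n.-tuple RL)%type] (@consT n).
Proof.
apply: (@measurable_cons _ _ _ _ (@fst RL (n.-tuple RL)) n (@snd RL (n.-tuple RL))).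
- exact: measurable_fst.
- exact: measurable_snd.
Qed.

HB.instance Definition _ n := isMeasurableFun.Build _ _ _ _ (@consT n)
  (@measurable_consT n).

(** Lebesgue measure on (0,1) (= uniform probability on [0,1]). *)
Definition unif01 : probability RL R := uniform_prob (@ltr01 R).

Fixpoint cube_prob (n : nat) : probability (n.-tuple RL) R :=
  match n return probability (n.-tuple RL) R with
  | 0 => \d_ [tuple]
  | n'.+1 => distribution (product_measure1 unif01 (cube_prob n')) (@consT n')
  end.

End cube.

Section sobol.
Context (R : realType).
Local Notation RL := (measurableTypeR R).

Definition cint n (phi : n.-tuple RL -> R) : R :=
  (\int[cube_prob R n]_x phi x)%R.

Definition inL2 n (phi : n.-tuple RL -> R) : Prop :=
  measurable_fun [set: n.-tuple RL] phi /\
  (cube_prob R n).-integrable [set: n.-tuple RL] (fun x => (phi x ^+ 2)%:E).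

Definition ae_constant n (phi : n.-tuple RL -> R) : Prop :=
  exists c : R, {ae cube_prob R n, forall x, phi x = c}.

Definition mean0 n (phi : n.-tuple RL -> R) : R := cint phi.
Definition Var0 n (phi : n.-tuple RL -> R) : R :=
  cint (fun x => phi x ^+ 2) - mean0 phi ^+ 2.
Definition Cov0 n (phi psi : n.-tuple RL -> R) : R :=
  cint (fun x => phi x * psi x) - mean0 phi * mean0 psi.

Definition setcoord n (x : n.-tuple RL) (i : 'I_n) (t : RL) : n.-tuple RL :=
  [tuple (if j == i then t else tnth x j) | j < n].

Definition int_xi n (i : 'I_n) (phi : n.-tuple RL -> R) (x : n.-tuple RL) : R :=
  (\int[unif01 R]_t phi (setcoord x i t))%R.

(** Since (int phi dx_i) depends only on
    x_{~i}, its integral over x_{~i} against Lebesgue measure on (0,1)^(n-1)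
    equals its integral over x against Lebesgue measure on (0,1)^n. *)
Definition total_sobol n (i : 'I_n) (phi : n.-tuple RL -> R) : R :=
  (cint (fun x => phi x ^+ 2) - cint (fun x => int_xi i phi x ^+ 2))
  / Var0 phi.

End sobol.

From mathcomp Require Import all_boot all_order all_algebra.
From mathcomp Require Import all_classical all_reals all_analysis.
From mathcomp Require Import measurable_realfun ring lra.
Import Order.TTheory GRing.Theory Num.Theory.
Set Implicit Arguments.
Unset Strict Implicit.
Unset Printing Implicit Defensive.
Local Open Scope classical_set_scope.
Local Open Scope ring_scope.

(* The numerator of the total index, T_i(phi) = int phi^2 - int (int phi dx_i)^2,
   is the quadratic form of the bilinear form
   B_i(phi, psi) = int phi psi - int (int phi dx_i) (int psi dx_i), which is
   positive semidefinite: after Fubini in x_i, T_i(phi) >= 0 is Jensen's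
   inequality (int phi dx_i)^2 <= int phi^2 dx_i.  Hence sqrt T_i is a seminorm
   and T_i(f + h) <= (sqrt T_i(f) + sqrt T_i(h))^2, while
   Var(f + h) = Var f + Var h + 2 Cov(f, h) >= Var f + Var h; dividing gives
   the first bound.  With M the larger of the two indices, T_i(f) <= M Var f and
   T_i(h) <= M Var h, and (sqrt a + sqrt b)^2 <= 2 (a + b) gives the factor 2.
   It is attained for n = 2, i = 1 by f = a + b and h = a - b, where a and b
   are the indicators of {x_1 <= 1/2} and {x_2 <= 1/2}: then
   S^f = S^h = 1/2 while g = 2a has S^g = 1. *)

Section real_integral.
Context (R : realType) d (T : measurableType d).
Context (mu : {measure set T -> \bar R}).
Implicit Types (f g : T -> R) (c : R).

Lemma integrableD_EFin f g : mu.-integrable [set: T] (EFin \o f) ->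
  mu.-integrable [set: T] (EFin \o g) ->
  mu.-integrable [set: T] (EFin \o (fun x => f x + g x)).
Proof. exact: integrableD. Qed.

Lemma integrableZl_EFin c f : mu.-integrable [set: T] (EFin \o f) ->
  mu.-integrable [set: T] (EFin \o (fun x => c * f x)).
Proof. exact: integrableZl. Qed.

Lemma ae_eq_Rintegral (g f : T -> R) :
  measurable_fun [set: T] f -> measurable_fun [set: T] g ->
  {ae mu, forall x, f x = g x} -> \int[mu]_x f x = \int[mu]_x g x.
Proof.
move=> mf mg ae; rewrite /Rintegral; congr fine.
apply: ae_eq_integral => //; [exact/measurable_EFinP|exact/measurable_EFinP|].
by apply: filterS ae => x -> _.
Qed.

End real_integral.

Section square_integrable.
Context (R : realType) d (T : measurableType d) (P : probability T R).
Implicit Types (f g : T -> R) (c : R).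

Definition square_integrable f := measurable_fun [set: T] f /\
  P.-integrable [set: T] (fun x => (f x ^+ 2)%:E).

Lemma integrable_sqr f : square_integrable f ->
  P.-integrable [set: T] (EFin \o (fun x => f x ^+ 2)).
Proof. by case. Qed.

Lemma integrableM_square f g : square_integrable f -> square_integrable g ->
  P.-integrable [set: T] (EFin \o (fun x => f x * g x)).
Proof.
move=> [mf if2] [mg ig2].
apply: (le_integrable measurableT _ _ (integrableD measurableT if2 ig2)).
- by apply/measurable_EFinP; exact: measurable_funM.
move=> x _ /=; rewrite lee_fin [X in _ <= X]ger0_norm ?addr_ge0 ?sqr_ge0 //.
rewrite normrM -[f x ^+ 2]real_normK ?num_real //.
rewrite -[g x ^+ 2]real_normK ?num_real //.
have := sqr_ge0 (`|f x| - `|g x|); nra.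
Qed.

Lemma square_integrable_cst c : square_integrable (cst c).
Proof.
split; first exact: measurable_cst.
exact: (finite_measure_integrable_cst P (c ^+ 2)).
Qed.

Lemma square_integrable_integrable f : square_integrable f ->
  P.-integrable [set: T] (EFin \o f).
Proof.
move=> sf.
apply: eq_integrable (integrableM_square sf (square_integrable_cst 1)) => //.
by move=> x _ /=; rewrite mulr1.
Qed.

Lemma square_integrableD f g : square_integrable f -> square_integrable g ->
  square_integrable (fun x => f x + g x).
Proof.
move=> sf sg; split; first by apply: measurable_funD; [case: sf | case: sg].
have ifg := integrableM_square sf sg.
have := integrableD measurableT (integrableD measurableT (integrable_sqr sf)
  (integrable_sqr sg)) (integrableZl measurableT 2 ifg).
by apply: eq_integrable => // x _ /=; rewrite -EFinM -!EFinD; congr EFin; ring.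
Qed.

Lemma square_integrableZ c f : square_integrable f ->
  square_integrable (fun x => c * f x).
Proof.
move=> sf; split.
  by apply: measurable_funM; [exact: measurable_cst|case: sf].
have := integrableZl measurableT (c ^+ 2) (integrable_sqr sf).
by apply: eq_integrable => // x _ /=; rewrite -EFinM exprMn.
Qed.

Lemma integral_cst_prob (r : \bar R) : (\int[P]_x r)%E = r.
Proof. by rewrite integral_cst //= probability_setT mule1. Qed.

Lemma Rintegral_cst_prob c : \int[P]_x c = c.
Proof. by rewrite /Rintegral integral_cst_prob. Qed.

Lemma Rintegral_sqrD f g c : square_integrable f -> square_integrable g ->
  \int[P]_x (f x + c * g x) ^+ 2 = \int[P]_x f x ^+ 2 +
    2 * c * \int[P]_x (f x * g x) + c ^+ 2 * \int[P]_x g x ^+ 2.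
Proof.
move=> sf sg; have ifg := integrableM_square sf sg.
rewrite (eq_Rintegral P (g := fun x => f x ^+ 2 + (2 * c * (f x * g x) +
  c ^+ 2 * g x ^+ 2))); last by move=> x _; ring.
have i2 := integrableZl_EFin (2 * c) ifg.
have i3 := integrableZl_EFin (c ^+ 2) (integrable_sqr sg).
rewrite RintegralD //; [|exact: integrable_sqr|exact: integrableD_EFin].
rewrite RintegralD // !RintegralZl ?addrA //; exact: integrable_sqr.
Qed.

Lemma Rintegral_sqr_centered f : square_integrable f ->
  \int[P]_x (f x - \int[P]_y f y) ^+ 2 =
  \int[P]_x f x ^+ 2 - (\int[P]_x f x) ^+ 2.
Proof.
move=> sf; set m := \int[P]_y f y.
rewrite (eq_Rintegral P (g := fun x => (f x + (- m) * cst 1 x) ^+ 2));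
  last by move=> x _; rewrite /= mulr1.
rewrite Rintegral_sqrD //; last exact: square_integrable_cst.
have -> : \int[P]_x (f x * cst 1 x) = m.
  by apply: eq_Rintegral => x _; rewrite mulr1.
have -> : \int[P]_x cst 1 x ^+ 2 = 1.
  rewrite -[RHS](Rintegral_cst_prob 1).
  by apply: eq_Rintegral => x _; rewrite expr1n.
ring.
Qed.

Lemma sqr_Rintegral_le f : square_integrable f ->
  (\int[P]_x f x) ^+ 2 <= \int[P]_x f x ^+ 2.
Proof.
move=> sf; rewrite -subr_ge0 -Rintegral_sqr_centered //.
by apply: Rintegral_ge0 => x _; exact: sqr_ge0.
Qed.

Lemma sqr_Rintegral_eqP f : square_integrable f ->
  \int[P]_x f x ^+ 2 = (\int[P]_x f x) ^+ 2 <->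
  exists c, {ae P, forall x, f x = c}.
Proof.
move=> sf; have [mf _] := sf; split => [sq_eq|[c fc]]; last first.
  have fc2 : {ae P, forall x, f x ^+ 2 = c ^+ 2} by apply: filterS fc => x ->.
  rewrite (ae_eq_Rintegral (g := fun=> c) mf) //.
  rewrite (ae_eq_Rintegral (g := fun=> c ^+ 2)) //; last exact: measurable_funX.
  by rewrite !Rintegral_cst_prob.
set m := \int[P]_y f y; exists m.
have sfm : square_integrable (fun x => f x - m).
  exact: square_integrableD sf (square_integrable_cst (- m)).
have [mfm ifm] := sfm.
have int0 : (\int[P]_x `|((f x - m) ^+ 2)%:E| = 0)%E.
  under eq_integral do rewrite gee0_abs ?lee_fin ?sqr_ge0 //.
  rewrite -(fineK (integrable_fin_num measurableT ifm)); congr EFin.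
  transitivity (\int[P]_x (f x - m) ^+ 2); first by [].
  by rewrite Rintegral_sqr_centered // sq_eq subrr.
have mF : measurable_fun [set: T] (fun x => ((f x - m) ^+ 2)%:E).
  by apply/measurable_EFinP; exact: measurable_funX.
move/(ae_eq_integral_abs _ measurableT mF).1: int0.
apply: filterS => x /(_ I) /= /eqP.
by rewrite eqe sqrf_eq0 subr_eq0 => /eqP.
Qed.

End square_integrable.

Section sqrt_inequalities.
Context (R : rcfType).
Implicit Types a b c : R.

Lemma quadratic_ge0_le_sqrtM a b c : 0 <= a -> 0 <= c ->
  (forall l, 0 <= a + 2 * l * b + l ^+ 2 * c) -> b <= Num.sqrt a * Num.sqrt c.
Proof.
move=> a0 c0 ge0.
suff b2 : b ^+ 2 <= a * c.
  by rewrite -sqrtrM // (le_trans (ler_norm b)) // -sqrtr_sqr ler_wsqrtr.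
have [c_gt0|] := ltrP 0 c.
  have := ge0 (- b / c).
  have -> : a + 2 * (- b / c) * b + (- b / c) ^+ 2 * c = a - b ^+ 2 / c.
    by field; rewrite gt_eqF.
  by rewrite subr_ge0 ler_pdivrMr // mulrC.
move=> c_le0; have c_eq0 : c = 0 by apply/eqP; rewrite eq_le c_le0 c0.
have [->|b_neq0] := eqVneq b 0; first by rewrite expr0n c_eq0 mulr0.
have := ge0 (- (a + 1) / (2 * b)).
have -> : a + 2 * (- (a + 1) / (2 * b)) * b + (- (a + 1) / (2 * b)) ^+ 2 * c
    = - 1 by rewrite c_eq0 mulr0 addr0; field.
by rewrite lerNr oppr0 ler10.
Qed.

Lemma sqr_sqrtD_le a b : 0 <= a -> 0 <= b ->
  (Num.sqrt a + Num.sqrt b) ^+ 2 <= 2 * (a + b).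
Proof.
move=> a0 b0; have := sqr_ge0 (Num.sqrt a - Num.sqrt b).
by rewrite sqrrB sqrrD !sqr_sqrtr //; lra.
Qed.

Lemma sqr_sqrtD_div_le_max a b c d : 0 <= a -> 0 <= b -> 0 < c -> 0 < d ->
  (Num.sqrt a + Num.sqrt b) ^+ 2 / (c + d) <= 2 * Num.max (a / c) (b / d).
Proof.
move=> a0 b0 c0 d0; set M := Num.max _ _.
have M0 : 0 <= M by rewrite le_max divr_ge0 // ltW.
have le_sqrtM x y :
    0 < y -> x / y <= M -> Num.sqrt x <= Num.sqrt M * Num.sqrt y.
  by move=> y0 xyM; rewrite -sqrtrM // ler_wsqrtr // -ler_pdivrMr.
have sa : Num.sqrt a <= Num.sqrt M * Num.sqrt c.
  by apply: le_sqrtM; rewrite // le_max lexx.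
have sb : Num.sqrt b <= Num.sqrt M * Num.sqrt d.
  by apply: le_sqrtM; rewrite // le_max lexx orbT.
rewrite ler_pdivrMr ?addr_gt0 //.
apply: (@le_trans _ _ ((Num.sqrt M * (Num.sqrt c + Num.sqrt d)) ^+ 2)).
  by rewrite ler_sqr ?nnegrE ?addr_ge0 ?mulr_ge0 ?sqrtr_ge0 // mulrDr lerD.
rewrite exprMn sqr_sqrtr // [2 * M]mulrC -mulrA ler_wpM2l //.
by rewrite sqr_sqrtD_le // ltW.
Qed.

End sqrt_inequalities.

Section resampling.
Context (R : realType).
Local Notation RL := (measurableTypeR R).
Local Notation cube := (cube_prob R).
Local Notation U := (unif01 R).

Lemma tnth_setcoord n (x : n.-tuple RL) i t j :
  tnth (setcoord x i t) j = if j == i then t else tnth x j.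
Proof. by rewrite /setcoord tnth_mktuple. Qed.

Lemma tnth_consT0 n s (y : n.-tuple RL) : tnth (consT (s, y)) ord0 = s.
Proof. by []. Qed.

Lemma tnth_consTS n s (y : n.-tuple RL) j :
  tnth (consT (s, y)) (lift ord0 j) = tnth y j.
Proof. exact: tnthS. Qed.

Lemma setcoord_cons0 n s (y : n.-tuple RL) t :
  setcoord (consT (s, y)) ord0 t = consT (t, y).
Proof.
apply: eq_from_tnth => j; rewrite tnth_setcoord.
case: (unliftP ord0 j) => [k ->|->]; last by rewrite eqxx.
by rewrite eq_sym (negbTE (neq_lift _ _)) !tnth_consTS.
Qed.

Lemma setcoord_consS n s (y : n.-tuple RL) (i : 'I_n) t :
  setcoord (consT (s, y)) (lift ord0 i) t = consT (s, setcoord y i t).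
Proof.
apply: eq_from_tnth => j; rewrite tnth_setcoord.
case: (unliftP ord0 j) => [k ->|->].
  by rewrite (inj_eq (@lift_inj _ ord0)) !tnth_consTS tnth_setcoord.
by rewrite (negbTE (neq_lift _ _)).
Qed.

Lemma measurable_setcoord n (i : 'I_n) :
  measurable_fun [set: (n.-tuple RL * RL)%type] (fun p => setcoord p.1 i p.2).
Proof.
apply/measurable_fun_tnthP => j /=.
rewrite (_ : _ \o _ = fun p => if j == i then p.2 else tnth p.1 j); last first.
  by apply/funext => p /=; rewrite tnth_setcoord.
case: (j == i); first exact: measurable_snd.
exact: measurableT_comp (measurable_tnth j) measurable_fst.
Qed.

Lemma measurable_setcoord_section n (i : 'I_n) (phi : n.-tuple RL -> R) x :
  measurable_fun [set: n.-tuple RL] phi ->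
  measurable_fun [set: RL] (fun t => phi (setcoord x i t)).
Proof.
move=> mphi; apply: measurableT_comp mphi _.
exact: measurableT_comp (measurable_setcoord i)
  (measurable_fun_pair (measurable_cst x) (@measurable_id _ RL setT)).
Qed.

Lemma integral_cube_prob_cons n (F : n.+1.-tuple RL -> \bar R) :
  measurable_fun [set: n.+1.-tuple RL] F -> (forall x, 0 <= F x)%E ->
  (\int[cube n.+1]_x F x = \int[U]_s \int[cube n]_y F (consT (s, y)))%E.
Proof.
move=> mF F0 /=; rewrite ge0_integral_distribution //.
rewrite (fubini_tonelli1 (F \o @consT R n)) // => [|x]; last exact: F0.
exact: (measurableT_comp mF (@measurable_consT R n)).
Qed.

Lemma measurable_integral_setcoord n (i : 'I_n) (F : n.-tuple RL -> \bar R) :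
  measurable_fun [set: n.-tuple RL] F -> (forall x, 0 <= F x)%E ->
  measurable_fun [set: n.-tuple RL] (fun x => \int[U]_t F (setcoord x i t))%E.
Proof.
move=> mF F0; exact: (measurable_fun_fubini_tonelli_F
  (fun p => F (setcoord p.1 i p.2))
  (measurableT_comp mF (measurable_setcoord i)) (fun p => F0 _)).
Qed.

Lemma integral_setcoord n (i : 'I_n) (F : n.-tuple RL -> \bar R) :
  measurable_fun [set: n.-tuple RL] F -> (forall x, 0 <= F x)%E ->
  (\int[cube n]_x F x = \int[cube n]_x \int[U]_t F (setcoord x i t))%E.
Proof.
elim: n i F => [|n IH] i F mF F0; first by case: i.
have mFcons := measurableT_comp mF (@measurable_consT R n).
have G0 x : (0 <= \int[U]_t F (setcoord x i t))%E by exact: integral_ge0.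
rewrite integral_cube_prob_cons //.
rewrite (integral_cube_prob_cons (measurable_integral_setcoord i mF F0) G0).
case: (unliftP ord0 i) => [j ->|->].
- apply: eq_integral => s _.
  under [RHS]eq_integral => y _ do under eq_integral => t _ do
    rewrite setcoord_consS.
  apply: (IH j (fun y => F (consT (s, y)))) => [|y]; last exact: F0.
  exact: measurableT_comp mFcons
    (measurable_fun_pair (measurable_cst s) (@measurable_id _ _ setT)).
- under [RHS]eq_integral => s _ do under eq_integral => y _ do
    under eq_integral => t _ do rewrite setcoord_cons0.
  rewrite integral_cst //= probability_setT mule1.
  by rewrite (fubini_tonelli (F \o @consT R n)) // => x; exact: F0.
Qed.

End resampling.

Section int_xi.
Context (R : realType) (n : nat) (i : 'I_n).
Local Notation RL := (measurableTypeR R).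
Local Notation cube := (cube_prob R n).
Local Notation U := (unif01 R).
Implicit Types phi psi : n.-tuple RL -> R.

Lemma measurable_int_xi phi : measurable_fun [set: n.-tuple RL] phi ->
  measurable_fun [set: n.-tuple RL] (int_xi i phi).
Proof.
move=> mphi; have mE : measurable_fun [set: n.-tuple RL] (EFin \o phi).
  exact/measurable_EFinP.
rewrite /int_xi /Rintegral.
apply: (measurableT_comp (fine_measurable measurableT)).
have -> : (fun x => \int[U]_t (phi (setcoord x i t))%:E)%E =
    (fun x => \int[U]_t (EFin \o phi)^\+ (setcoord x i t) -
              \int[U]_t (EFin \o phi)^\- (setcoord x i t))%E.
  apply/funext => x; rewrite integralE.
  by congr (_ - _)%E; apply: eq_integral => t _; rewrite ?funeposE ?funenegE.
apply: emeasurable_funB.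
- exact: measurable_integral_setcoord (measurable_funepos mE) (funepos_ge0 _).
- exact: measurable_integral_setcoord (measurable_funeneg mE) (funeneg_ge0 _).
Qed.

Lemma ae_square_integrable_section phi : inL2 phi ->
  {ae cube, forall x, square_integrable U (fun t => phi (setcoord x i t))}.
Proof.
move=> [mphi iphi].
have msq : measurable_fun [set: n.-tuple RL] (fun y => (phi y ^+ 2)%:E).
  by apply/measurable_EFinP; exact: measurable_funX.
have sq0 y : (0 <= (phi y ^+ 2)%:E)%E by rewrite lee_fin sqr_ge0.
set G := fun x => (\int[U]_t (phi (setcoord x i t) ^+ 2)%:E)%E.
have G0 x : (0 <= G x)%E by apply: integral_ge0 => t _.
have iG : cube.-integrable [set: n.-tuple RL] G.
  apply/integrableP; split; first exact: measurable_integral_setcoord msq sq0.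
  under eq_integral do rewrite gee0_abs ?G0 //.
  rewrite /G -(integral_setcoord i msq sq0).
  by move/integrableP: iphi => [_]; under eq_integral do rewrite gee0_abs //.
apply: filterS (integrable_ae measurableT iG) => x /(_ I) Gx_fin.
split; first exact: measurable_setcoord_section.
apply/integrableP; split.
  apply/measurable_EFinP; apply: measurable_funX.
  exact: measurable_setcoord_section.
under eq_integral do rewrite gee0_abs //.
by move: Gx_fin; rewrite ge0_fin_numE.
Qed.

Lemma integral_sqr_int_xi_le phi : inL2 phi ->
  (\int[cube]_x ((int_xi i phi x) ^+ 2)%:E <= \int[cube]_x (phi x ^+ 2)%:E)%E.
Proof.
move=> Lphi; have [mphi _] := Lphi.
have msq : measurable_fun [set: n.-tuple RL] (fun y => (phi y ^+ 2)%:E).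
  by apply/measurable_EFinP; exact: measurable_funX.
have sq0 y : (0 <= (phi y ^+ 2)%:E)%E by rewrite lee_fin sqr_ge0.
rewrite (integral_setcoord i msq sq0).
apply: ae_ge0_le_integral => //.
- by move=> x _; rewrite lee_fin sqr_ge0.
- by apply/measurable_EFinP; apply: measurable_funX; exact: measurable_int_xi.
- by move=> x _; exact: integral_ge0.
- exact: measurable_integral_setcoord msq sq0.
apply: filterS (ae_square_integrable_section Lphi) => x sx _ /=.
have /integrable_fin_num fin := integrable_sqr sx.
rewrite -[X in (_ <= X)%E](fineK (fin measurableT)) lee_fin.
exact: sqr_Rintegral_le sx.
Qed.

Lemma inL2_int_xi phi : inL2 phi -> inL2 (int_xi i phi).
Proof.
move=> Lphi; have [mphi iphi] := Lphi.
split; first exact: measurable_int_xi.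
apply/integrableP; split.
  by apply/measurable_EFinP; apply: measurable_funX; exact: measurable_int_xi.
under eq_integral do rewrite gee0_abs ?lee_fin ?sqr_ge0 //.
apply: le_lt_trans (integral_sqr_int_xi_le Lphi) _.
move/integrableP: iphi => [_].
by under eq_integral do rewrite gee0_abs ?lee_fin ?sqr_ge0 //.
Qed.

Lemma cint_sqr_int_xi_le phi : inL2 phi ->
  cint (fun x => int_xi i phi x ^+ 2) <= cint (fun x => phi x ^+ 2).
Proof.
move=> Lphi; apply: fine_le (integral_sqr_int_xi_le Lphi).
- exact: (integrable_fin_num measurableT (inL2_int_xi Lphi).2).
- by case: Lphi => _ /(integrable_fin_num measurableT).
Qed.

Lemma int_xiD phi psi c : inL2 phi -> inL2 psi ->
  {ae cube, forall x, int_xi i (fun y => phi y + c * psi y) x =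
                      int_xi i phi x + c * int_xi i psi x}.
Proof.
move=> Lphi Lpsi.
apply: filterS2 (ae_square_integrable_section Lphi)
  (ae_square_integrable_section Lpsi) => x sphi spsi.
have Iphi := square_integrable_integrable sphi.
have Ipsi := square_integrable_integrable spsi.
by rewrite /int_xi RintegralD ?RintegralZl //; exact: integrableZl_EFin.
Qed.

End int_xi.

Section total_variance.
Context (R : realType) (n : nat).
Local Notation RL := (measurableTypeR R).
Implicit Types (f h : n.-tuple RL -> R) (c : R).

Definition total_variance (i : 'I_n) f :=
  cint (fun x => f x ^+ 2) - cint (fun x => int_xi i f x ^+ 2).

Definition total_covariance (i : 'I_n) f h :=
  cint (fun x => f x * h x) - cint (fun x => int_xi i f x * int_xi i h x).

Lemma total_sobolE i f : total_sobol i f = total_variance i f / Var0 f.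
Proof. by []. Qed.

Lemma total_covariance_diag i f : total_covariance i f f = total_variance i f.
Proof.
rewrite /total_covariance /total_variance /cint.
under eq_Rintegral do rewrite -expr2.
by under [X in _ - X]eq_Rintegral do rewrite -expr2.
Qed.

Lemma total_variance_ge0 i f : inL2 f -> 0 <= total_variance i f.
Proof. by move=> Lf; rewrite subr_ge0 cint_sqr_int_xi_le. Qed.

Lemma total_varianceD i f h c : inL2 f -> inL2 h ->
  total_variance i (fun x => f x + c * h x) = total_variance i f +
    2 * c * total_covariance i f h + c ^+ 2 * total_variance i h.
Proof.
move=> Lf Lh; have Lpf := inL2_int_xi i Lf; have Lph := inL2_int_xi i Lh.
have [mfh _] : inL2 (fun x => f x + c * h x).
  exact: square_integrableD Lf (square_integrableZ c Lh).
have [mpfh _] : inL2 (fun x => int_xi i f x + c * int_xi i h x).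
  exact: square_integrableD Lpf (square_integrableZ c Lph).
rewrite /total_variance /total_covariance.
have -> : cint (fun x => int_xi i (fun y => f y + c * h y) x ^+ 2) =
          cint (fun x => (int_xi i f x + c * int_xi i h x) ^+ 2).
  apply: ae_eq_Rintegral; [|exact: measurable_funX|].
    by apply: measurable_funX; exact: measurable_int_xi.
  by apply: filterS (int_xiD i c Lf Lh) => x ->.
(* on abstract reals, as [ring] is very slow on the integrals themselves *)
have quadraticB (A B C D E F : R) :
  (A + 2 * c * B + c ^+ 2 * C) - (D + 2 * c * E + c ^+ 2 * F) =
  (A - D) + 2 * c * (B - E) + c ^+ 2 * (C - F) by ring.
by rewrite /cint !Rintegral_sqrD // quadraticB.
Qed.

Lemma total_covariance_le i f h : inL2 f -> inL2 h ->
  total_covariance i f h <=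
  Num.sqrt (total_variance i f) * Num.sqrt (total_variance i h).
Proof.
move=> Lf Lh; apply: quadratic_ge0_le_sqrtM; try exact: total_variance_ge0.
move=> l; rewrite -total_varianceD //; apply: total_variance_ge0.
exact: square_integrableD Lf (square_integrableZ l Lh).
Qed.

Lemma total_varianceD_le i f h : inL2 f -> inL2 h ->
  total_variance i (fun x => f x + h x) <=
  (Num.sqrt (total_variance i f) + Num.sqrt (total_variance i h)) ^+ 2.
Proof.
move=> Lf Lh; have := total_covariance_le i Lf Lh.
have := total_variance_ge0 i Lf; have := total_variance_ge0 i Lh.
under eq_fun do rewrite -[h _]mul1r.
rewrite total_varianceD //.
(* generalize first: [lra] is very slow on the unfolded definitions *)
move: (total_variance i f) (total_variance i h) (total_covariance i f h).
by move=> a b C b0 a0 C_le; rewrite sqrrD !sqr_sqrtr //; lra.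
Qed.

Lemma Var0_ge0 f : inL2 f -> 0 <= Var0 f.
Proof. by move=> Lf; rewrite subr_ge0 sqr_Rintegral_le. Qed.

Lemma Var0_eq0 f : inL2 f -> Var0 f = 0 <-> ae_constant f.
Proof.
move=> Lf; rewrite /ae_constant -(sqr_Rintegral_eqP Lf) /Var0 /mean0 /cint.
by split => [/eqP|->]; rewrite ?subrr // subr_eq0 => /eqP.
Qed.

Lemma Var0_gt0 f : inL2 f -> ~ ae_constant f -> 0 < Var0 f.
Proof.
move=> Lf fNcst; rewrite lt_def Var0_ge0 // andbT.
by apply/eqP => /(Var0_eq0 Lf).
Qed.

Lemma Var0D f h c : inL2 f -> inL2 h ->
  Var0 (fun x => f x + c * h x) = Var0 f + 2 * c * Cov0 f h + c ^+ 2 * Var0 h.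
Proof.
move=> Lf Lh; have If := square_integrable_integrable Lf.
have Ih := square_integrable_integrable Lh.
rewrite /Var0 /Cov0 /mean0 /cint Rintegral_sqrD // RintegralD //;
  last exact: integrableZl_EFin.
rewrite RintegralZl //; ring.
Qed.

Lemma Cov0_diag f : Cov0 f f = Var0 f.
Proof.
by rewrite /Cov0 /Var0 /cint -expr2; under eq_Rintegral do rewrite -expr2.
Qed.

End total_variance.

Lemma total_sobolD_le (R : realType) n (i : 'I_n)
    (f h : n.-tuple (measurableTypeR R) -> R) :
  inL2 f -> inL2 h -> ~ ae_constant f -> ~ ae_constant h -> 0 <= Cov0 f h ->
  let g := fun x => f x + h x in
  total_sobol i g <= (Num.sqrt (total_sobol i f * Var0 f)
    + Num.sqrt (total_sobol i h * Var0 h)) ^+ 2 / (Var0 f + Var0 h)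
  /\ total_sobol i g <= 2 * Num.max (total_sobol i f) (total_sobol i h).
Proof.
move=> Lf Lh fNcst hNcst cov_ge0 g.
have Vf := Var0_gt0 Lf fNcst; have Vh := Var0_gt0 Lh hNcst.
have VfVh : 0 < Var0 f + Var0 h by rewrite addr_gt0.
have Vg : Var0 f + Var0 h <= Var0 g.
  have -> : g = (fun x => f x + 1 * h x) by apply/funext => x; rewrite mul1r.
  by rewrite Var0D // expr1n mul1r lerD2r lerDl mulr_ge0.
have Tg_le := total_varianceD_le i Lf Lh.
have Tg0 : 0 <= total_variance i g.
  exact/total_variance_ge0/square_integrableD.
have Sg_le : total_sobol i g <=
    (Num.sqrt (total_variance i f) + Num.sqrt (total_variance i h)) ^+ 2
    / (Var0 f + Var0 h).
  apply: (@le_trans _ _ (total_variance i g / (Var0 f + Var0 h))).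
    by rewrite ler_wpM2l // lef_pV2 ?posrE // (lt_le_trans VfVh).
  by rewrite ler_pM2r ?invr_gt0.
rewrite !total_sobolE !divfK ?gt_eqF //; split => //.
apply: le_trans Sg_le (sqr_sqrtD_div_le_max _ _ Vf Vh);
  exact: total_variance_ge0.
Qed.

Section coordinate_functions.
Context (R : realType).
Local Notation RL := (measurableTypeR R).
Local Notation U := (unif01 R).

Lemma int_xi_coord n (i : 'I_n) (F : R -> R) x :
  int_xi i (fun y => F (tnth y i)) x = \int[U]_t F t.
Proof. by apply: eq_Rintegral => t _; rewrite tnth_setcoord eqxx. Qed.

Lemma int_xi_id n (i : 'I_n) (phi : n.-tuple RL -> R) :
  (forall x t, phi (setcoord x i t) = phi x) -> int_xi i phi = phi.
Proof.
move=> phi_i; apply/funext => x; rewrite /int_xi.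
under eq_Rintegral do rewrite phi_i.
exact: Rintegral_cst_prob.
Qed.

Lemma integral_cube1 (G : R -> \bar R) :
  measurable_fun [set: RL] G -> (forall t, 0 <= G t)%E ->
  (\int[cube_prob R 1]_y G (tnth y ord0) = \int[U]_t G t)%E.
Proof.
move=> mG G0; rewrite integral_cube_prob_cons //; last first.
  exact: measurableT_comp mG (measurable_tnth ord0).
apply: eq_integral => s _.
by rewrite -[RHS](integral_cst_prob (cube_prob R 0)).
Qed.

Lemma Rintegral_cube2_indep (F G : R -> R) :
  measurable_fun [set: RL] F -> measurable_fun [set: RL] G ->
  (forall t, 0 <= F t) -> (forall t, 0 <= G t) ->
  U.-integrable [set: RL] (EFin \o F) -> U.-integrable [set: RL] (EFin \o G) ->
  cint (fun x : 2.-tuple RL => F (tnth x ord0) * G (tnth x (lift ord0 ord0))) =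
  \int[U]_t F t * \int[U]_t G t.
Proof.
move=> mF mG F0 G0 iF iG.
have mEF : measurable_fun [set: RL] (EFin \o F) by exact/measurable_EFinP.
have mEG : measurable_fun [set: RL] (EFin \o G) by exact/measurable_EFinP.
rewrite /cint /Rintegral -fineM ?(integrable_fin_num measurableT) //.
congr fine.
rewrite integral_cube_prob_cons; last 2 first.
- apply/measurable_EFinP; apply: measurable_funM.
  + exact: measurableT_comp mF (measurable_tnth ord0).
  + exact: measurableT_comp mG (measurable_tnth _).
- by move=> x; rewrite lee_fin mulr_ge0.
under [LHS]eq_integral => s _ do under eq_integral => y _ do
  rewrite tnth_consTS tnth_consT0 EFinM.
have mG1 : measurable_fun [set: 1.-tuple RL] (fun y => (G (tnth y ord0))%:E).
  exact: measurableT_comp mEG (measurable_tnth ord0).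
under [LHS]eq_integral => s _.
  rewrite ge0_integralZl ?lee_fin // => [|y _]; last by rewrite lee_fin.
  rewrite (integral_cube1 (G := EFin \o G)) //.
  over.
rewrite /= ge0_integralZr // => [t _|]; first by rewrite lee_fin.
by apply: integral_ge0 => t _; rewrite lee_fin.
Qed.

End coordinate_functions.

Section sharpness.
Context (R : realType).
Local Notation RL := (measurableTypeR R).
Local Notation U := (unif01 R).

Definition lower_half (t : R) : R := \1_`[0, 2^-1] t.

Lemma measurable_lower_half : measurable_fun [set: RL] lower_half.
Proof. by apply: measurable_indic; exact: measurable_itv. Qed.

Lemma lower_half_ge0 t : 0 <= lower_half t.
Proof. by rewrite /lower_half indicE; case: (t \in _). Qed.

Lemma lower_half_sqr t : lower_half t ^+ 2 = lower_half t.
Proof.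
by rewrite /lower_half indicE; case: (t \in _); rewrite ?expr1n ?expr0n.
Qed.

Lemma integrable_lower_half : U.-integrable [set: RL] (EFin \o lower_half).
Proof. exact: (integrable_indic U (measurable_itv `[0, 2^-1]%R)). Qed.

Lemma Rintegral_lower_half : \int[U]_t lower_half t = 2^-1.
Proof.
have mA : measurable (`[0, 2^-1] : set RL) by exact: measurable_itv.
rewrite /Rintegral integral_indic // setIT.
change (fine (integral (@lebesgue_measure R) `[0, 2^-1]
  (fun x => (uniform_pdf 0 1 x)%:E)) = 2^-1).
rewrite integral_uniform_pdf setIidl => [|x]; last first.
  by rewrite /= !in_itv /= => /andP[-> x_le]; lra.
rewrite (eq_integral (fun=> 1%:E)) => [|x]; last first.
  rewrite inE /= in_itv /= => /andP[x0 x_le].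
  by rewrite /uniform_pdf x0 (_ : x <= 1) /= ?subr0 ?invr1 //; lra.
rewrite integral_cst // mul1e.
have := @lebesgue_measure_itv R `[0, 2^-1]%R.
by rewrite /= lte_fin invr_gt0 ltr0n /= oppr0 adde0 => ->.
Qed.

Lemma inL2_lower_half_coord n (j : 'I_n) :
  inL2 (fun x : n.-tuple RL => lower_half (tnth x j)).
Proof.
have mj := measurableT_comp measurable_lower_half (measurable_tnth j).
split => //.
apply: le_integrable (finite_measure_integrable_cst _ 1 measurableT) => //.
- by apply/measurable_EFinP; exact: measurable_funX.
move=> x _ /=.
rewrite lee_fin lower_half_sqr normr1 ger0_norm ?lower_half_ge0 //.
by rewrite /lower_half indicE; case: (_ \in _).
Qed.

Local Notation i1 := (lift ord0 ord0 : 'I_2).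

Definition lower1 (x : 2.-tuple RL) := lower_half (tnth x ord0).
Definition lower2 (x : 2.-tuple RL) := lower_half (tnth x i1).

Lemma cint_lower1 : cint lower1 = 2^-1.
Proof.
transitivity (cint (fun x => lower1 x * cst 1 (tnth x i1))).
  by apply: eq_Rintegral => x _; rewrite mulr1.
rewrite Rintegral_cube2_indep ?Rintegral_cst_prob ?Rintegral_lower_half
  ?mulr1 //;
  first [exact: measurable_lower_half | exact: integrable_lower_half
        | exact: finite_measure_integrable_cst].
Qed.

Lemma cint_lower2 : cint lower2 = 2^-1.
Proof.
transitivity (cint (fun x => cst 1 (tnth x ord0) * lower2 x)).
  by apply: eq_Rintegral => x _; rewrite mul1r.
rewrite Rintegral_cube2_indep ?Rintegral_cst_prob ?Rintegral_lower_half
  ?mul1r //;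
  first [exact: measurable_lower_half | exact: integrable_lower_half
        | exact: finite_measure_integrable_cst].
Qed.

Lemma cint_lower12 : cint (fun x => lower1 x * lower2 x) = 2^-1 * 2^-1.
Proof.
rewrite Rintegral_cube2_indep ?Rintegral_lower_half //;
  first [exact: measurable_lower_half | exact: integrable_lower_half
        | exact: finite_measure_integrable_cst].
Qed.

Lemma Var0_lower1 : Var0 lower1 = 4^-1.
Proof.
rewrite /Var0; have -> : (fun x => lower1 x ^+ 2) = lower1.
  by apply/funext => x; exact: lower_half_sqr.
by rewrite /mean0 cint_lower1; field.
Qed.

Lemma Var0_lower2 : Var0 lower2 = 4^-1.
Proof.
rewrite /Var0; have -> : (fun x => lower2 x ^+ 2) = lower2.
  by apply/funext => x; exact: lower_half_sqr.
by rewrite /mean0 cint_lower2; field.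
Qed.

Lemma Cov0_lower12 : Cov0 lower1 lower2 = 0.
Proof. by rewrite /Cov0 /mean0 cint_lower12 cint_lower1 cint_lower2 subrr. Qed.

Lemma int_xi_lower1 x : int_xi ord0 lower1 x = 2^-1.
Proof. by rewrite int_xi_coord Rintegral_lower_half. Qed.

Lemma int_xi_lower2 : int_xi ord0 lower2 = lower2.
Proof. by apply: int_xi_id => x t; rewrite /lower2 tnth_setcoord. Qed.

Lemma total_variance_lower1 : total_variance ord0 lower1 = 4^-1.
Proof.
rewrite -Var0_lower1 /total_variance /Var0 /mean0 cint_lower1 /cint.
under [X in _ - X]eq_Rintegral do rewrite int_xi_lower1.
by rewrite Rintegral_cst_prob.
Qed.

Lemma total_variance_lower2 : total_variance ord0 lower2 = 0.
Proof. by rewrite /total_variance int_xi_lower2 subrr. Qed.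

Lemma total_covariance_lower12 : total_covariance ord0 lower1 lower2 = 0.
Proof.
rewrite /total_covariance int_xi_lower2 cint_lower12.
have -> : cint (fun x => int_xi ord0 lower1 x * lower2 x) = 2^-1 * cint lower2.
  rewrite /cint -RintegralZl //; last first.
    exact/square_integrable_integrable/inL2_lower_half_coord.
  by apply: eq_Rintegral => x _; rewrite int_xi_lower1.
by rewrite cint_lower2 subrr.
Qed.

Lemma total_sobol_sharp (c : R) : c < 2 ->
  exists (n : nat) (i : 'I_n) (f h : n.-tuple RL -> R),
    (0 < n)%N /\ inL2 f /\ inL2 h /\ ~ ae_constant f /\ ~ ae_constant h /\
    0 <= Cov0 f h /\
    c * Num.max (total_sobol i f) (total_sobol i h)
      < total_sobol i (fun x => f x + h x).
Proof.
move=> c_lt2.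
have L1 : inL2 lower1 := inL2_lower_half_coord ord0.
have L2 : inL2 lower2 := inL2_lower_half_coord i1.
pose f x := lower1 x + 1 * lower2 x; pose h x := lower1 x + (-1) * lower2 x.
have Lf : inL2 f := square_integrableD L1 (square_integrableZ 1 L2).
have Lh : inL2 h := square_integrableD L1 (square_integrableZ (-1) L2).
have eg : (fun x => f x + h x) = (fun x => lower1 x + 1 * lower1 x).
  by apply/funext => x; rewrite /f /h; ring.
have Vf : Var0 f = 2^-1.
  by rewrite Var0D // Var0_lower1 Var0_lower2 Cov0_lower12; field.
have Vh : Var0 h = 2^-1.
  by rewrite Var0D // Var0_lower1 Var0_lower2 Cov0_lower12; field.
have Vg : Var0 (fun x => f x + h x) = 1.
  by rewrite eg Var0D // Cov0_diag Var0_lower1; field.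
have Sf : total_sobol ord0 f = 2^-1.
  rewrite total_sobolE Vf total_varianceD //.
  rewrite total_variance_lower1 total_variance_lower2 total_covariance_lower12.
  by field.
have Sh : total_sobol ord0 h = 2^-1.
  rewrite total_sobolE Vh total_varianceD //.
  rewrite total_variance_lower1 total_variance_lower2 total_covariance_lower12.
  by field.
have Sg : total_sobol ord0 (fun x => f x + h x) = 1.
  by rewrite total_sobolE Vg eg total_varianceD // total_covariance_diag
    total_variance_lower1; field.
exists 2%N, ord0, f, h.
split; first by [].
split; first exact: Lf.
split; first exact: Lh.
split; first by move/(Var0_eq0 Lf)/eqP; rewrite Vf invr_eq0 pnatr_eq0.
split; first by move/(Var0_eq0 Lh)/eqP; rewrite Vh invr_eq0 pnatr_eq0.
split.
  have := Var0D 1 Lf Lh; under eq_fun do rewrite mul1r.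
  rewrite Vg Vf Vh expr1n !mul1r.
  (* clear the context: [lra] would reify it, unfolding [Var0] and [cint] *)
  by move: (Cov0 f h) => C; clear -C; lra.
by rewrite Sf Sh Sg maxxx ltr_pdivrMr // mul1r.
Qed.

End sharpness.

Theorem theoremB2 (R : realType) :
  (forall (n : nat) (i : 'I_n) (f h : n.-tuple (measurableTypeR R) -> R),
     (0 < n)%N ->
     inL2 f -> inL2 h -> ~ ae_constant f -> ~ ae_constant h ->
     0 <= Cov0 f h ->
     let g := fun x => f x + h x in
     total_sobol i g <=
       (Num.sqrt (total_sobol i f * Var0 f)
        + Num.sqrt (total_sobol i h * Var0 h)) ^+ 2
       / (Var0 f + Var0 h)
     /\ total_sobol i g <= 2 * Num.max (total_sobol i f) (total_sobol i h))
  /\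
  (forall c : R, c < 2 ->
     exists (n : nat) (i : 'I_n) (f h : n.-tuple (measurableTypeR R) -> R),
       (0 < n)%N /\ inL2 f /\ inL2 h /\ ~ ae_constant f /\ ~ ae_constant h /\
       0 <= Cov0 f h /\
       c * Num.max (total_sobol i f) (total_sobol i h)
         < total_sobol i (fun x => f x + h x)).
Proof.
split; last exact: total_sobol_sharp.
by move=> n i f h _; exact: total_sobolD_le.
Qed.
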